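(* Let $\mathbf{L}\in\mathbb{R}^{n\times n}$ be symmetric and $\mathbf{V}\in\mathbb{R}^{n\times p}$ ($0\le p\le n$) of full column rank, such that $\widetilde{\mathbf{L}}=(\mathbf{I}-\mathbf{Q}\mathbf{Q}^\top)\mathbf{L}(\mathbf{I}-\mathbf{Q}\mathbf{Q}^\top)$ is positive semi-definite, where $\mathbf{Q}\in\mathbb{R}^{n\times p}$ is an orthonormal basis of the column span of $\mathbf{V}$. Let $\sigma^2>0$ and, for $\varepsilon>0$, let $$\mathbf{M}_\varepsilon=(\mathbf{L}+\varepsilon^{-1}\mathbf{V}\mathbf{V}^\top)(\mathbf{L}+\sigma^2\mathbf{I}+\varepsilon^{-1}\mathbf{V}\mathbf{V}^\top)^{-1}.$$ Then as $\varepsilon\to0$, $$\mathbf{M}_\varepsilon=\mathbf{Q}\mathbf{Q}^\top+\widetilde{\mathbf{U}}\widetilde{\boldsymbol\Lambda}(\widetilde{\boldsymbol\Lambda}+\sigma^2\mathbf{I})^{-1}\widetilde{\mathbf{U}}^\top+O(\varepsilon)=\mathbf{Q}\mathbf{Q}^\top+\widetilde{\mathbf{L}}(\widetilde{\mathbf{L}}+\sigma^2\mathbf{I})^{-1}+O(\varepsilon),$$ where $\widetilde{\mathbf{L}}=\widetilde{\mathbf{U}}\widetilde{\boldsymbol\Lambda}\widetilde{\mathbf{U}}^\top$ is the truncated spectral decomposition of $\widetilde{\mathbf{L}}$ ($\widetilde{\boldsymbol\Lambda}$ the diagonal matrix of its nonzero eigenvalues, $\widetilde{\mathbf{U}}$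 the corresponding orthonormal eigenvectors).
   Context: $\mathbf{M}_\varepsilon$ is the smoother matrix of GP regression with covariance matrix $\mathbf{L}+\varepsilon^{-1}\mathbf{V}\mathbf{V}^\top$ and noise variance $\sigma^2$. *)

From HB Require Import structures.
From mathcomp Require Import all_boot all_order all_algebra.
From mathcomp Require Import reals.
Set Implicit Arguments. Unset Strict Implicit. Unset Printing Implicit Defensive.
Import Order.TTheory GRing.Theory Num.Theory.
Local Open Scope ring_scope.

Definition psdmx (R : realType) (n : nat) (A : 'M[R]_n) : Prop :=
  forall x : 'cV[R]_n, 0 <= (x^T *m A *m x) 0 0.

(* f(eps) = O(eps) as eps -> 0 (eps > 0): entrywise (all norms on a
   finite-dimensional space are equivalent). *)
Definition bigO_eps (R : realType) (m n : nat) (f : R -> 'M[R]_(m, n)) : Prop :=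
  exists C : R, exists delta : R, 0 < delta /\
    forall eps : R, 0 < eps -> eps < delta ->
      forall i j, `|f eps i j| <= C * eps.

Definition smoother (R : realType) (n p : nat) (L : 'M[R]_n) (V : 'M[R]_(n, p))
  (sigma2 eps : R) : 'M[R]_n :=
  (L + eps^-1 *: (V *m V^T)) *m invmx (L + sigma2%:M + eps^-1 *: (V *m V^T)).

Definition Ltilde (R : realType) (n p : nat) (L : 'M[R]_n) (Q : 'M[R]_(n, p)) : 'M[R]_n :=
  (1%:M - Q *m Q^T) *m L *m (1%:M - Q *m Q^T).

(* Write s = sigma^2, P = Q Q^T, P' = 1 - P and B_eps = L + s + eps^-1 V V^T, so
   that the smoother is 1 - s B_eps^-1.  Rescaling the ran P component turns
   the singular perturbation into a regular one:
     B_eps (P' + eps P) = E + eps F,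
   with E = (L + s) P' + V V^T invertible and F = (L + s) P.  Hence
   B_eps^-1 = (P' + eps P) (E + eps F)^-1 = P' E^-1 + O(eps), and P' E^-1 is
   the compressed resolvent P' (Ltilde + s)^-1 P' = (Ltilde + s)^-1 - s^-1 P.
   The error is exactly -s eps (P - P' E^-1 F) (E + eps F)^-1, bounded through
   a Neumann-series estimate in the entrywise l1 norm.  The spectral form
   follows by conjugating the resolvent of diag d with U. *)

From HB Require Import structures.
From mathcomp Require Import all_boot all_order all_algebra.
From mathcomp Require Import reals.
From mathcomp Require Import lra.
Set Implicit Arguments. Unset Strict Implicit. Unset Printing Implicit Defensive.
Import Order.TTheory GRing.Theory Num.Theory.
Local Open Scope ring_scope.

Section EntrywiseNorm.
Variable R : realType.

Lemma ler_term_sum (I : finType) (F : I -> R) i :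
  (forall j, 0 <= F j) -> F i <= \sum_j F j.
Proof. by move=> F_ge0; rewrite (bigD1 i) //= lerDl sumr_ge0. Qed.

Definition mxnorm m n (A : 'M[R]_(m, n)) : R := \sum_i \sum_j `|A i j|.

Lemma mxnorm_ge0 m n (A : 'M[R]_(m, n)) : 0 <= mxnorm A.
Proof. by apply: sumr_ge0 => i _; apply: sumr_ge0. Qed.

Lemma ler_entry_mxnorm m n (A : 'M[R]_(m, n)) i j : `|A i j| <= mxnorm A.
Proof.
apply: (le_trans (@ler_term_sum _ (fun l => `|A i l|) j _)) => //.
by apply: (@ler_term_sum _ (fun k => \sum_l `|A k l|)) => k; apply: sumr_ge0.
Qed.

Lemma mxnorm_le0 m n (A : 'M[R]_(m, n)) : mxnorm A <= 0 -> A = 0.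
Proof.
move=> A_le0; apply/matrixP => i j; rewrite mxE; apply/eqP.
by rewrite -normr_le0 (le_trans (ler_entry_mxnorm A i j)).
Qed.

Lemma mxnormD m n (A B : 'M[R]_(m, n)) : mxnorm (A + B) <= mxnorm A + mxnorm B.
Proof.
rewrite -big_split ler_sum // => i _; rewrite -big_split ler_sum // => j _.
by rewrite mxE ler_normD.
Qed.

Lemma mxnormZ m n a (A : 'M[R]_(m, n)) : mxnorm (a *: A) = `|a| * mxnorm A.
Proof.
rewrite mulr_sumr; apply: eq_bigr => i _; rewrite mulr_sumr.
by apply: eq_bigr => j _; rewrite mxE normrM.
Qed.

Lemma mxnormN m n (A : 'M[R]_(m, n)) : mxnorm (- A) = mxnorm A.
Proof. by rewrite -scaleN1r mxnormZ normrN1 mul1r. Qed.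

Lemma mxnorm0 m n : mxnorm (0 : 'M[R]_(m, n)) = 0.
Proof. by rewrite -(scale0r 0) mxnormZ normr0 mul0r. Qed.

Lemma mxnormM m n k (A : 'M[R]_(m, n)) (B : 'M[R]_(n, k)) :
  mxnorm (A *m B) <= mxnorm A * mxnorm B.
Proof.
rewrite mulr_suml ler_sum // => i _.
apply: (@le_trans _ _ (\sum_j \sum_l `|A i l| * `|B l j|)).
  rewrite ler_sum // => j _; rewrite mxE (le_trans (ler_norm_sum _ _ _)) //.
  by rewrite ler_sum // => l _; rewrite normrM.
rewrite exchange_big mulr_suml ler_sum //= => l _.
rewrite -mulr_sumr ler_wpM2l //.
by apply: (@ler_term_sum _ (fun l => \sum_j `|B l j|)) => l'; apply: sumr_ge0.
Qed.

Lemma mxnorm1 n : mxnorm (1%:M : 'M[R]_n) = n%:R.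
Proof.
rewrite /mxnorm -[n in RHS]card_ord -sumr_const; apply: eq_bigr => i _.
rewrite (bigD1 i) //= big1 => [|j /negPf ji]; rewrite mxE.
  by rewrite eqxx normr1 addr0.
by rewrite eq_sym ji normr0.
Qed.

End EntrywiseNorm.

Lemma invmx_left (R : comUnitRingType) n (A X : 'M[R]_n) :
  X *m A = 1%:M -> invmx A = X.
Proof. by move=> XA1; rewrite -[X](mulmxK (mulmx1_unit XA1).2) XA1 mul1mx. Qed.

Lemma invmx_resolvent (R : comUnitRingType) n (A B : 'M[R]_n) :
  A \in unitmx -> B \in unitmx ->
  invmx A - invmx B = invmx A *m (B - A) *m invmx B.
Proof.
move=> uA uB; rewrite mulmxBr mulmxBl mulVmx // mul1mx -mulmxA mulmxV //.
by rewrite mulmx1.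
Qed.

Section SmallPerturbation.
Variables (R : realType) (n : nat).
Implicit Types (A E H : 'M[R]_n).

Lemma mxnorm_le_mul1D H m (K : 'M[R]_(m, n)) :
  mxnorm H <= 1/2 -> mxnorm K <= 2 * mxnorm (K *m (1%:M + H)).
Proof.
move=> H_small; set C := K *m (1%:M + H).
have K_le : mxnorm K <= mxnorm C + mxnorm K * mxnorm H.
  have K_eq : K = C - K *m H by rewrite /C mulmxDr mulmx1 addrK.
  by rewrite {1}K_eq (le_trans (mxnormD _ _)) // mxnormN lerD2l mxnormM.
have := mxnorm_ge0 K; have := mxnorm_ge0 H; nra.
Qed.

Lemma unitmx_1D H : mxnorm H <= 1/2 -> 1%:M + H \in unitmx.
Proof.
move=> H_small; rewrite -row_free_unit -kermx_eq0; apply/eqP/mxnorm_le0.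
have := mxnorm_le_mul1D (kermx (1%:M + H)) H_small.
by rewrite mulmx_ker mxnorm0 mulr0.
Qed.

Lemma mxnorm_invmx_1D H :
  mxnorm H <= 1/2 -> mxnorm (invmx (1%:M + H)) <= 2 * n%:R.
Proof.
move=> H_small; have := mxnorm_le_mul1D (invmx (1%:M + H)) H_small.
by rewrite mulVmx ?unitmx_1D // mxnorm1.
Qed.

Lemma addmx_factor E A : E \in unitmx -> E + A = E *m (1%:M + invmx E *m A).
Proof. by move=> uE; rewrite mulmxDr mulmx1 mulKVmx. Qed.

Lemma unitmx_addr E A :
  E \in unitmx -> mxnorm (invmx E *m A) <= 1/2 -> E + A \in unitmx.
Proof. by move=> uE small; rewrite addmx_factor // unitmx_mul uE unitmx_1D. Qed.

Lemma mxnorm_invmx_addr E A :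
  E \in unitmx -> mxnorm (invmx E *m A) <= 1/2 ->
  mxnorm (invmx (E + A)) <= 2 * n%:R * mxnorm (invmx E).
Proof.
move=> uE small; set H := invmx E *m A.
have -> : invmx (E + A) = invmx (1%:M + H) *m invmx E.
  apply: invmx_left; rewrite addmx_factor // mulmxA -(mulmxA _ _ E) mulVmx //.
  by rewrite mulmx1 mulVmx ?unitmx_1D.
apply: (le_trans (mxnormM _ _)); rewrite ler_wpM2r ?mxnorm_ge0 //.
exact: mxnorm_invmx_1D.
Qed.

End SmallPerturbation.

Lemma psdmx_add_scalar_unit (R : realType) n (A : 'M[R]_n) s :
  psdmx A -> 0 < s -> A + s%:M \in unitmx.
Proof.
move=> psdA s_gt0; rewrite -row_free_unit -kermx_eq0.
apply/eqP/row_matrixP => i.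
set v := row i _; rewrite row0.
have vA : v *m A = - (s *: v).
  apply/eqP; rewrite -addr_eq0 -mul_mx_scalar -mulmxDr.
  by rewrite -row_mul mulmx_ker row0.
have sq_sum_le0 : \sum_k v 0 k ^+ 2 <= 0.
  have := psdA v^T; rewrite trmxK vA mulNmx -scalemxAl !mxE oppr_ge0.
  rewrite pmulr_rle0 //; congr (_ <= _); apply: eq_bigr => k _.
  by rewrite !mxE expr2.
apply/rowP => k; rewrite [RHS]mxE; apply/eqP.
rewrite -sqrf_eq0 eq_le sqr_ge0 andbT.
apply: le_trans sq_sum_le0.
by apply: (@ler_term_sum _ _ (fun k => v 0 k ^+ 2)) => j; apply: sqr_ge0.
Qed.

Lemma mulmx_subr_scalar_invmx (R : comUnitRingType) n (A : 'M[R]_n) s :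
  A \in unitmx -> (A - s%:M) *m invmx A = 1%:M - s *: invmx A.
Proof. by move=> uA; rewrite mulmxBl mulmxV // mul_scalar_mx. Qed.

Lemma gram_eq_orthonormal_span (R : fieldType) n p (Q V : 'M[R]_(n, p)) :
  Q^T *m Q = 1%:M -> (Q^T == V^T)%MS ->
  exists2 W : 'M[R]_p, W \in unitmx & V *m V^T = Q *m W *m Q^T.
Proof.
move=> Q_orthonormal /andP[/submxP[Y QY] /submxP[X VX]].
have YX : Y *m X = 1%:M.
  by rewrite -Q_orthonormal [in RHS]QY VX -!mulmxA Q_orthonormal mulmx1.
exists (X^T *m X); first by rewrite unitmx_mul unitmx_tr (mulmx1_unit YX).2.
have VQ : V = Q *m X^T by rewrite -[V]trmxK VX trmx_mul trmxK.
by rewrite VQ trmx_mul trmxK !mulmxA.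
Qed.

Lemma psdmx_conj (R : realType) n r (A : 'M[R]_n) (U : 'M[R]_(n, r)) :
  psdmx A -> psdmx (U^T *m A *m U).
Proof. by move=> psdA x; have := psdA (U *m x); rewrite trmx_mul !mulmxA. Qed.

Lemma conj_resolvent (R : comUnitRingType) n r
    (U : 'M[R]_(n, r)) (D : 'M[R]_r) s :
  U^T *m U = 1%:M -> D + s%:M \in unitmx -> U *m D *m U^T + s%:M \in unitmx ->
  U *m D *m invmx (D + s%:M) *m U^T
    = U *m D *m U^T *m invmx (U *m D *m U^T + s%:M).
Proof.
move=> U_orthonormal uD uA; apply: (canRL (mulmxK uA)).
have UtA : U^T *m (U *m D *m U^T + s%:M) = (D + s%:M) *m U^T.
  rewrite mulmxDr !mulmxA U_orthonormal mul1mx mulmxDl.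
  by rewrite mul_mx_scalar mul_scalar_mx.
by rewrite -mulmxA UtA mulmxA mulmxKV.
Qed.

Lemma bigO_eps_mxnorm (R : realType) m n (f : R -> 'M[R]_(m, n)) C delta :
  0 < delta ->
  (forall eps, 0 < eps -> eps < delta -> mxnorm (f eps) <= C * eps) ->
  bigO_eps f.
Proof.
move=> delta_gt0 f_le; exists C, delta; split=> // eps eps_gt0 eps_lt i j.
exact: le_trans (ler_entry_mxnorm _ i j) (f_le _ eps_gt0 eps_lt).
Qed.

Definition projmx (R : ringType) n p (Q : 'M[R]_(n, p)) : 'M[R]_n := Q *m Q^T.
Definition coprojmx (R : ringType) n p (Q : 'M[R]_(n, p)) : 'M[R]_n :=
  1%:M - projmx Q.

Section OrthogonalProjection.
Variables (R : realType) (n p : nat) (Q : 'M[R]_(n, p)).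
Hypothesis Q_orthonormal : Q^T *m Q = 1%:M.

Local Notation P := (projmx Q).
Local Notation P' := (coprojmx Q).

Lemma trQ_mul_proj : Q^T *m P = Q^T.
Proof. by rewrite mulmxA Q_orthonormal mul1mx. Qed.

Lemma proj_mul_Q : P *m Q = Q.
Proof. by rewrite -mulmxA Q_orthonormal mulmx1. Qed.

Lemma proj_idem : P *m P = P.
Proof. by rewrite -mulmxA trQ_mul_proj. Qed.

Lemma trQ_mul_coproj : Q^T *m P' = 0.
Proof. by rewrite mulmxBr mulmx1 trQ_mul_proj subrr. Qed.

Lemma coproj_mul_Q : P' *m Q = 0.
Proof. by rewrite mulmxBl mul1mx proj_mul_Q subrr. Qed.

Lemma proj_mul_coproj : P *m P' = 0.
Proof. by rewrite -mulmxA trQ_mul_coproj mulmx0. Qed.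

Lemma coproj_mul_proj : P' *m P = 0.
Proof. by rewrite mulmxA coproj_mul_Q mul0mx. Qed.

Lemma coproj_idem : P' *m P' = P'.
Proof. by rewrite {1}/coprojmx mulmxBl mul1mx proj_mul_coproj subr0. Qed.

Variable L : 'M[R]_n.

Lemma LtildeE : Ltilde L Q = P' *m L *m P'.
Proof. by []. Qed.

Lemma Ltilde_mul_proj : Ltilde L Q *m P = 0.
Proof. by rewrite LtildeE -!mulmxA coproj_mul_proj !mulmx0. Qed.

Lemma proj_mul_Ltilde : P *m Ltilde L Q = 0.
Proof. by rewrite LtildeE !mulmxA proj_mul_coproj !mul0mx. Qed.

Lemma coproj_compress_add_scalar s :
  P' *m (L + s%:M) *m P' = Ltilde L Q + s%:M - s *: P.
Proof.
rewrite -mulmxA [(L + _) *m _]mulmxDl mul_scalar_mx [P' *m _]mulmxDr.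
rewrite -scalemxAr coproj_idem mulmxA.
by rewrite -LtildeE /coprojmx scalerBr scalemx1 addrA.
Qed.

Section SmootherLimit.
Variables (V : 'M[R]_(n, p)) (W : 'M[R]_p) (s : R).
Hypothesis W_unit : W \in unitmx.
Hypothesis gram_VQ : V *m V^T = Q *m W *m Q^T.
Hypothesis Ltilde_psd : psdmx (Ltilde L Q).
Hypothesis s_gt0 : 0 < s.

Let A := Ltilde L Q + s%:M.
Let Z := invmx A.
Let G := P' *m Z *m P'.
Let E := (L + s%:M) *m P' + Q *m W *m Q^T.
Let F := (L + s%:M) *m P.

Let A_unit : A \in unitmx. Proof. exact: psdmx_add_scalar_unit. Qed.
Let s_neq0 : s != 0. Proof. by rewrite gt_eqF. Qed.

Lemma resolvent_mul_proj : Z *m P = s^-1 *: P.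
Proof.
apply: (canLR (mulKmx A_unit)).
rewrite /A -scalemxAr mulmxDl Ltilde_mul_proj add0r mul_scalar_mx.
by rewrite scalerA mulVf ?scale1r.
Qed.

Lemma proj_mul_resolvent : P *m Z = s^-1 *: P.
Proof.
apply: (canLR (mulmxK A_unit)).
rewrite /A -scalemxAl mulmxDr proj_mul_Ltilde add0r mul_mx_scalar.
by rewrite scalerA mulVf ?scale1r.
Qed.

Lemma compressed_resolventE : G = Z - s^-1 *: P.
Proof.
rewrite /G /coprojmx !(mulmxBl, mulmxBr, mul1mx, mulmx1) resolvent_mul_proj.
rewrite proj_mul_resolvent -scalemxAl proj_idem.
by rewrite opprB addrA subrK.
Qed.

Lemma compressed_resolvent_mul_Q : G *m Q = 0.
Proof. by rewrite /G -mulmxA coproj_mul_Q mulmx0. Qed.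

Lemma compressed_resolvent_mul_E : G *m E = P'.
Proof.
rewrite /E mulmxDr !mulmxA compressed_resolvent_mul_Q !mul0mx addr0.
have -> : G *m (L + s%:M) *m P' = P' *m Z *m (P' *m (L + s%:M) *m P').
  by rewrite /G !mulmxA.
rewrite coproj_compress_add_scalar -/A mulmxBr -mulmxA mulVmx // mulmx1.
rewrite -scalemxAr -mulmxA resolvent_mul_proj -scalemxAr scalerA mulfV //.
by rewrite scale1r coproj_mul_proj subr0.
Qed.

Lemma trQ_mul_E : Q^T *m E = Q^T *m (L + s%:M) *m P' + W *m Q^T.
Proof. by rewrite /E mulmxDr !mulmxA Q_orthonormal mul1mx. Qed.

(* In the splitting ran P' (+) ran P, [E] is block lower triangular with
   diagonal blocks [P' (L + s) P'] and [Q W Q^T]; this is its inverse. *)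
Lemma unitmx_E : E \in unitmx.
Proof.
set K := Q *m invmx W *m Q^T.
have KE : K *m E = K *m (L + s%:M) *m P' + P.
  by rewrite {1}/K -(mulmxA _ Q^T E) trQ_mul_E mulmxDr !mulmxA mulmxKV.
suff: (G + K - K *m (L + s%:M) *m G) *m E = 1%:M by case/mulmx1_unit.
have -> : (G + K - K *m (L + s%:M) *m G) *m E
    = G *m E + K *m E - K *m (L + s%:M) *m (G *m E).
  by rewrite mulmxBl mulmxDl !mulmxA.
rewrite compressed_resolvent_mul_E KE addrCA addrAC subrr add0r.
by rewrite /coprojmx subrK.
Qed.

Lemma coproj_mul_invmx_E : P' *m invmx E = G.
Proof. by rewrite -compressed_resolvent_mul_E mulmxK ?unitmx_E. Qed.

Let B eps := L + s%:M + eps^-1 *: (V *m V^T).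
Let D eps := P' + eps *: P.

Lemma B_mul_rescale eps : eps != 0 -> B eps *m D eps = E + eps *: F.
Proof.
move=> eps_neq0.
have gram_mul_D : Q *m W *m Q^T *m D eps = eps *: (Q *m W *m Q^T).
  rewrite /D mulmxDr -scalemxAr -!mulmxA trQ_mul_coproj trQ_mul_proj.
  by rewrite !mulmx0 add0r.
rewrite /B mulmxDl gram_VQ -scalemxAl gram_mul_D scalerA mulVf // scale1r.
by rewrite /D mulmxDr -scalemxAr addrAC.
Qed.

Section SmallEps.
Variable eps : R.
Hypothesis eps_gt0 : 0 < eps.
Hypothesis eps_small : mxnorm (invmx E *m (eps *: F)) <= 1/2.

Let K := invmx (E + eps *: F).
Let K_unit : E + eps *: F \in unitmx.
Proof. exact: unitmx_addr unitmx_E eps_small. Qed.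

Lemma B_unit : B eps \in unitmx.
Proof.
by have := K_unit; rewrite -B_mul_rescale ?gt_eqF // unitmx_mul => /andP[].
Qed.

Lemma invmx_B : invmx (B eps) = D eps *m K.
Proof.
apply: invmx_left; apply: mulmx1C.
by rewrite mulmxA B_mul_rescale ?gt_eqF // mulmxV.
Qed.

Lemma invmx_B_sub_compressed :
  invmx (B eps) - G = eps *: ((P - P' *m invmx E *m F) *m K).
Proof.
have resolvent : invmx E - K = eps *: (invmx E *m F *m K).
  by rewrite invmx_resolvent ?unitmx_E // addrC addKr -scalemxAr -scalemxAl.
have coproj_sub : P' *m K - G = - eps *: (P' *m invmx E *m F *m K).
  rewrite -coproj_mul_invmx_E -mulmxBr -opprB resolvent mulmxN -scalemxAr.
  by rewrite scaleNr !mulmxA.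
rewrite invmx_B /D mulmxDl addrAC coproj_sub -scalemxAl [(P - _) *m K]mulmxBl.
by rewrite scalerBr scaleNr addrC.
Qed.

Lemma smoother_sub_limitE :
  smoother L V s eps - P - Ltilde L Q *m Z
    = - (s * eps) *: ((P - P' *m invmx E *m F) *m K).
Proof.
have smootherE : smoother L V s eps = 1%:M - s *: invmx (B eps).
  by rewrite -mulmx_subr_scalar_invmx ?B_unit // /B addrAC addrK.
have LtildeZ : Ltilde L Q *m Z = 1%:M - s *: Z.
  by rewrite -mulmx_subr_scalar_invmx // /A addrK.
have sG : s *: G = s *: Z - P.
  by rewrite compressed_resolventE scalerBr scalerA mulfV // scale1r.
rewrite smootherE LtildeZ scaleNr -scalerA -invmx_B_sub_compressed scalerBr sG.
by rewrite opprB [_ - _ - _ + _]addrC !addrA addrNK opprB addrAC.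
Qed.

Lemma mxnorm_smoother_sub_limit :
  mxnorm (smoother L V s eps - P - Ltilde L Q *m Z)
    <= s * (mxnorm (P - P' *m invmx E *m F) * (2 * n%:R * mxnorm (invmx E)))
         * eps.
Proof.
rewrite smoother_sub_limitE mxnormZ normrN gtr0_norm ?mulr_gt0 //.
rewrite mulrAC ler_pM2r // ler_pM2l // (le_trans (mxnormM _ _)) //.
by rewrite ler_wpM2l ?mxnorm_ge0 ?mxnorm_invmx_addr ?unitmx_E.
Qed.
End SmallEps.

Lemma smoother_sub_limit_bigO :
  bigO_eps (fun eps => smoother L V s eps - P - Ltilde L Q *m Z).
Proof.
set c := mxnorm (invmx E *m F).
have c_ge0 : 0 <= c by apply: mxnorm_ge0.
apply: (bigO_eps_mxnorm (delta := 1 / (2 * (c + 1)))) => [|eps eps_gt0 eps_lt].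
  by rewrite divr_gt0 // mulr_gt0 // ltr_wpDl.
apply: mxnorm_smoother_sub_limit => //.
rewrite -scalemxAr mxnormZ gtr0_norm // -/c.
move: eps_lt; rewrite ltr_pdivlMr ?mulr_gt0 ?ltr_wpDl //; nra.
Qed.
End SmootherLimit.

End OrthogonalProjection.

Theorem mainTheorem7 (R : realType) (n p : nat)
  (L : 'M[R]_n) (V : 'M[R]_(n, p)) (Q : 'M[R]_(n, p)) (sigma2 : R) :
  (p <= n)%N ->
  L^T = L ->
  \rank V = p ->
  Q^T *m Q = 1%:M ->
  (Q^T == V^T)%MS ->
  psdmx (Ltilde L Q) ->
  0 < sigma2 ->
  (forall (r : nat) (U : 'M[R]_(n, r)) (d : 'rV[R]_r),
      U^T *m U = 1%:M ->
      (forall i, d 0 i != 0) ->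
      Ltilde L Q = U *m diag_mx d *m U^T ->
      bigO_eps (fun eps => smoother L V sigma2 eps - Q *m Q^T
                 - U *m diag_mx d *m invmx (diag_mx d + sigma2%:M) *m U^T))
  /\
  bigO_eps (fun eps => smoother L V sigma2 eps - Q *m Q^T
             - Ltilde L Q *m invmx (Ltilde L Q + sigma2%:M)).
Proof.
move=> _ _ _ Q_orthonormal span_QV Ltilde_psd sigma2_gt0.
have [W W_unit gram_VQ] := gram_eq_orthonormal_span Q_orthonormal span_QV.
have limit :=
  smoother_sub_limit_bigO Q_orthonormal W_unit gram_VQ Ltilde_psd sigma2_gt0.
split=> // r U d U_orthonormal _ Ltilde_spectral.
have diag_psd : psdmx (diag_mx d).
  have := psdmx_conj U Ltilde_psd.
  rewrite Ltilde_spectral !mulmxA U_orthonormal mul1mx -mulmxA.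
  by rewrite U_orthonormal mulmx1.
by rewrite conj_resolvent ?psdmx_add_scalar_unit // -Ltilde_spectral.
Qed.
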